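(* Let $F$ be a finite-dimensional subspace of $c_0$ which is an ideal in $c_0$. Then $F^*$ is (isometrically) a subspace of $\ell_1$ which is $k$-strictly convex for some $k\in\mathbb N$.
   Context: $c_0$ carries the sup norm and $c_0^*=\ell_1$. A closed subspace $Y$ of $X$ is an ideal in $X$ if there is a linear projection $P$ on $X^*$ with $\|P\|=1$ and $\ker P=Y^\perp=\{x^*\in X^*:x^*|_Y=0\}$; then $Y^*$ is isometric to the range of $P$. A normed space $E$ is $k$-strictly convex if for any $k+1$ linearly independent $x_1,\dots,x_{k+1}\in S_E$ one has $\|\sum_{i=1}^{k+1}x_i\|<k+1$. *)

From HB Require Import structures.
From mathcomp Require Import all_boot all_order all_algebra.
From mathcomp Require Import all_classical all_reals all_analysis.
Set Implicit Arguments. Unset Strict Implicit. Unset Printing Implicit Defensive.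
Import Order.TTheory GRing.Theory Num.Theory.
Import numFieldNormedType.Exports.
Local Open Scope classical_set_scope.
Local Open Scope ring_scope.

Section Defs.
Variable R : realType.

Definition c0 : set (nat -> R) := [set x : nat -> R | x @ \oo --> 0].
Definition supnorm (x : nat -> R) : R := sup (range (fun n => `|x n|)).

Definition l1 : set (nat -> R) := [set a : nat -> R | cvgn (series (fun n => `|a n|))].
Definition l1norm (a : nat -> R) : R := limn (series (fun n => `|a n|)).

(* the duality pairing c_0^* = l_1 *)
Definition pairing (a x : nat -> R) : R := limn (series (fun n => a n * x n)).

Definition fspan (n : nat) (v : 'I_n -> nat -> R) : set (nat -> R) :=
  [set x | exists c : 'I_n -> R, x = (fun m => \sum_(i < n) c i * v i m)].

Definition annihilator (Y : set (nat -> R)) : set (nat -> R) :=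
  [set a | l1 a /\ forall x, Y x -> pairing a x = 0].

(* Y is an ideal in c_0: there is a linear projection P on c_0^* = l_1 with
   ||P|| = 1 and ker P = Y^perp *)
Definition is_ideal_in_c0 (Y : set (nat -> R)) : Prop :=
  exists P : (nat -> R) -> (nat -> R),
    [/\ (forall a, l1 a -> l1 (P a)),
        (forall (s t : R) a b, l1 a -> l1 b ->
            P (fun n => s * a n + t * b n) = (fun n => s * P a n + t * P b n)),
        (forall a, l1 a -> P (P a) = P a) &
        sup [set l1norm (P a) | a in [set a | l1 a /\ l1norm a <= 1]] = 1] /\
    (forall a, l1 a -> (P a = (fun _ => 0) <-> annihilator Y a)).

(* F^*: linear functionals on F (all bounded, F finite-dimensional),
   identified when they agree on F; dual norm *)
Definition dual_elt (F : set (nat -> R)) (g : (nat -> R) -> R) : Prop :=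
  forall (s t : R) x y, F x -> F y ->
    g (fun n => s * x n + t * y n) = s * g x + t * g y.
Definition dualnorm (F : set (nat -> R)) (g : (nat -> R) -> R) : R :=
  sup [set `|g x| | x in [set x | F x /\ supnorm x <= 1]].

Definition k_strictly_convex (k : nat) (V : set (nat -> R)) : Prop :=
  forall x : 'I_k.+1 -> nat -> R,
    (forall i, V (x i) /\ l1norm (x i) = 1) ->
    (forall c : 'I_k.+1 -> R,
        (fun m => \sum_(i < k.+1) c i * x i m) = (fun _ => 0) ->
        forall i, c i = 0) ->
    l1norm (fun m => \sum_(i < k.+1) x i m) < k.+1%:R.
End Defs.

From HB Require Import structures.
From mathcomp Require Import all_boot all_order all_algebra.
From mathcomp Require Import all_classical all_reals all_analysis.
From mathcomp Require Import zify ring.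
Import Order.TTheory GRing.Theory Num.Theory.
Import numFieldNormedType.Exports.
Local Open Scope classical_set_scope.
Local Open Scope ring_scope.
Set Implicit Arguments. Unset Strict Implicit. Unset Printing Implicit Defensive.

(* Let P be the norm-one projection on l_1 with kernel F^perp.  F is
   finite-dimensional, so there is an N such that on F every coordinate x m
   is a fixed linear combination of x 0, ..., x (N-1).  Hence every functional
   g on F is the pairing with a sequence r_g supported in [0, N), and every
   e_m differs from such a sequence by an element of F^perp, so that P e_m
   lies in the span of P e_0, ..., P e_(N-1).  Put T g := P r_g.  As r - P r
   lies in F^perp for every r, g x = <T g, x> on F, whence |g| <= |T g|.
   Conversely, for y = sign (T g) the functional a |-> sum_(k < M) (P a)_k y_k
   has norm at most |P| = 1 and kills F^perp, so it is the evaluation at some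
   x in the unit ball of F; then g x = sum_(k < M) |(T g)_k|.  Finally the
   range of T lies in an N-dimensional space, which contains no N+1
   independent vectors, so it is N-strictly convex. *)

Section SequenceSpaces.
Variable R : realType.
Implicit Types (a b x : nat -> R) (S : set (nat -> R)).

Definition finsupp (K : nat) a := forall m, (K <= m)%N -> a m = 0.

Lemma finsuppW K K' a : (K <= K')%N -> finsupp K a -> finsupp K' a.
Proof. by move=> hK ha m hm; apply: ha; apply: leq_trans hm. Qed.

Lemma sum_finsupp K M a : finsupp K a -> (K <= M)%N ->
  \sum_(m < M) a m = \sum_(m < K) a m.
Proof.
move=> ha hKM; rewrite -!(big_mkord xpredT a).
rewrite (@big_cat_nat _ _ _ K 0 M _ _ (leq0n K) hKM) /= [X in _ + X = _]big_nat_cond.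
by rewrite [X in _ + X = _]big1 ?addr0 // => m /andP[/andP[Km _] _]; exact: ha.
Qed.

Lemma series_finsupp K a : finsupp K a ->
  cvgn (series a) /\ limn (series a) = \sum_(m < K) a m.
Proof.
move=> ha; have h : series a @ \oo --> \sum_(m < K) a m.
  apply: cvg_near_cst; exists K => // M /= hKM.
  by rewrite /series /= big_mkord (sum_finsupp ha).
by split; [exact: cvgP h | exact: cvg_lim].
Qed.

Lemma l1_finsupp K a : finsupp K a -> l1 a /\ l1norm a = \sum_(m < K) `|a m|.
Proof. by move=> ha; apply: series_finsupp => m /ha ->; rewrite normr0. Qed.

Lemma pairing_finsupp K a x : finsupp K a -> pairing a x = \sum_(m < K) a m * x m.
Proof. by move=> ha; apply: (series_finsupp _).2 => m /ha ->; rewrite mul0r. Qed.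

Lemma pairing_finsuppB K a b x : finsupp K a -> finsupp K b ->
  pairing (fun m => a m - b m) x = pairing a x - pairing b x.
Proof.
move=> ha hb; have hab : finsupp K (fun m => a m - b m).
  by move=> m hm; rewrite ha ?hb ?subr0.
rewrite !(pairing_finsupp _ hab, pairing_finsupp _ ha, pairing_finsupp _ hb) -sumrB.
by apply: eq_bigr => m _; rewrite mulrBl.
Qed.

Lemma l1_psum_le a M : l1 a -> \sum_(m < M) `|a m| <= l1norm a.
Proof.
move=> ha; rewrite -(big_mkord xpredT (fun m => `|a m|)).
by apply: (nondecreasing_cvgn_le _ ha) => p q; apply: nondecreasing_series.
Qed.

Lemma l1norm_le a c : l1 a -> (forall M, \sum_(m < M) `|a m| <= c) -> l1norm a <= c.
Proof.
move=> ha hc; apply: limr_le => //.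
by near=> M; rewrite /series /= big_mkord.
Unshelve. all: by end_near. Qed.

Lemma is_cvg_normed_pairing a x : l1 a -> (forall m, `|x m| <= 1) ->
  cvgn [normed series (fun m => a m * x m)].
Proof.
move=> ha hx; apply: (series_le_cvg _ _ _ ha) => m //=.
by rewrite normrM -[leRHS]mulr1 ler_wpM2l.
Qed.

Lemma pairing_le a x : l1 a -> (forall m, `|x m| <= 1) -> `|pairing a x| <= l1norm a.
Proof.
move=> ha hx; apply: le_trans (lim_series_norm (is_cvg_normed_pairing ha hx)) _.
apply: lim_series_le => // [|m]; first exact: is_cvg_normed_pairing.
by rewrite /= normrM -[leRHS]mulr1 ler_wpM2l.
Qed.

Lemma pairingB a b x : l1 a -> l1 b -> (forall m, `|x m| <= 1) ->
  pairing (fun m => a m - b m) x = pairing a x - pairing b x.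
Proof.
move=> ha hb hx; rewrite /pairing -lim_seriesB.
  by congr (limn (series _)); apply/funext => m /=; rewrite mulrBl.
all: exact/normed_cvg/is_cvg_normed_pairing.
Qed.

Definition lin_closed S := S (fun _ => 0) /\
  forall (s t : R) x y, S x -> S y -> S (fun m => s * x m + t * y m).

Lemma lin_closed_sum S K (c : 'I_K -> R) (f : 'I_K -> nat -> R) :
  lin_closed S -> (forall j, S (f j)) -> S (fun m => \sum_(j < K) c j * f j m).
Proof.
move=> [S0 SD]; elim: K c f => [|K IH] c f Sf.
  by under eq_fun do rewrite big_ord0.
under eq_fun do rewrite big_ord_recr -[\sum_(_ < K) _]mul1r.
by apply: SD => //; apply: IH.
Qed.

Lemma dual_elt0 S L : lin_closed S -> dual_elt S L -> L (fun _ => 0) = 0.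
Proof. by move=> [S0 _] hL; have := hL 0 0 _ _ S0 S0; rewrite !mul0r addr0. Qed.

Lemma dual_elt_sum S L K (c : 'I_K -> R) (f : 'I_K -> nat -> R) :
  lin_closed S -> dual_elt S L -> (forall j, S (f j)) ->
  L (fun m => \sum_(j < K) c j * f j m) = \sum_(j < K) c j * L (f j).
Proof.
move=> hS hL; elim: K c f => [|K IH] c f Sf.
  by under eq_fun do rewrite big_ord0; rewrite big_ord0 (dual_elt0 hS hL).
under eq_fun do rewrite big_ord_recr -[\sum_(_ < K) _]mul1r.
by rewrite hL ?IH ?mul1r ?big_ord_recr //; apply: lin_closed_sum.
Qed.

Lemma c0_lin_closed : lin_closed (@c0 R).
Proof.
split=> [|s t x y hx hy]; first exact: cvg_cst.
have := cvgD (cvgM (cvg_cst s) hx) (cvgM (cvg_cst t) hy).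
rewrite !mulr0 addr0; exact.
Qed.

Lemma l1_lin_closed : lin_closed (@l1 R).
Proof.
split=> [|s t a b ha hb].
  by have [] := @l1_finsupp 0 (fun _ => 0) (fun _ _ => erefl).
have hc : cvgn (series (fun m => `|s| * `|a m| + `|t| * `|b m|)).
  have -> : (fun m => `|s| * `|a m| + `|t| * `|b m|) =
      `|s| *: (fun m => `|a m|) + `|t| *: (fun m => `|b m|) by apply/funext.
  by apply: is_cvg_seriesD; apply: is_cvg_seriesZ.
apply: (series_le_cvg _ _ _ hc) => m //=.
by apply: le_trans (ler_normD _ _) _; rewrite !normrM.
Qed.

Lemma l1B a b : l1 a -> l1 b -> l1 (fun m => a m - b m).
Proof.
move=> ha hb; have := l1_lin_closed.2 1 (-1) _ _ ha hb.
by under eq_fun do rewrite mul1r mulN1r.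
Qed.

Lemma fspan_lin_closed n (v : 'I_n -> nat -> R) : lin_closed (fspan v).
Proof.
split=> [|s t _ _ [c ->] [d ->]].
  by exists (fun _ => 0); apply/funext => m; rewrite big1 // => i _; rewrite mul0r.
exists (fun i => s * c i + t * d i); apply/funext => m.
by rewrite !mulr_sumr -big_split; apply: eq_bigr => i _; rewrite mulrDl !mulrA.
Qed.

Lemma supnorm_le x c : (forall m, `|x m| <= c) -> supnorm x <= c.
Proof.
by move=> hx; apply: ge_sup => [|_ [m _ <-]]; [exists `|x 0%N|, 0%N | exact: hx].
Qed.

Lemma c0_le_supnorm x m : c0 x -> `|x m| <= supnorm x.
Proof. by move=> hx; apply: ub_le_sup; [exact/cvg_has_ub/(cvgP _ hx) | exists m]. Qed.

Lemma le_sup_neq0 (E : set R) z : sup E != 0 -> E z -> z <= sup E.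
Proof.
move=> hE Ez; case: (pselect (has_sup E)) => [[_ hub] | /sup_out hsup].
  exact: ub_le_sup.
by rewrite hsup eqxx in hE.
Qed.

Definition basis_seq (j : nat) : nat -> R := fun m => (m == j)%:R.

Lemma finsupp_basis_seq j : finsupp j.+1 (basis_seq j).
Proof. by move=> m hm; rewrite /basis_seq; case: eqP => // e; rewrite e ltnn in hm. Qed.

Lemma sum_basis_seq j K x : (j < K)%N -> \sum_(m < K) basis_seq j m * x m = x j.
Proof.
move=> hj; rewrite (bigD1 (Ordinal hj)) //= /basis_seq eqxx mul1r.
rewrite big1 ?addr0 // => k hk.
by case: eqP => [e|]; [rewrite -(inj_eq val_inj) /= e eqxx in hk | rewrite mul0r].
Qed.

Lemma l1_basis_seq j : l1 (basis_seq j) /\ l1norm (basis_seq j) = 1.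
Proof.
have [hl1 ->] := l1_finsupp (@finsupp_basis_seq j); split => //.
rewrite -(@sum_basis_seq j j.+1 (fun _ => 1)) //.
by apply: eq_bigr => m _; rewrite mulr1 ger0_norm.
Qed.

Lemma pairing_basis_seq j x : pairing (basis_seq j) x = x j.
Proof. by rewrite (pairing_finsupp _ (@finsupp_basis_seq j)) sum_basis_seq. Qed.

Definition seq_of_row N (r : 'rV[R]_N) : nat -> R :=
  fun m => \sum_(j < N) r 0 j * basis_seq j m.

Lemma finsupp_seq_of_row N (r : 'rV[R]_N) : finsupp N (seq_of_row r).
Proof.
move=> m hm; rewrite /seq_of_row big1 // => j _.
by rewrite finsupp_basis_seq ?mulr0 //; apply: leq_trans hm.
Qed.

Lemma seq_of_row_lin N (s t : R) (r r' : 'rV[R]_N) :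
  seq_of_row (s *: r + t *: r') = fun m => s * seq_of_row r m + t * seq_of_row r' m.
Proof.
apply/funext => m; rewrite !mulr_sumr -big_split; apply: eq_bigr => j _.
by rewrite !mxE mulrDl !mulrA.
Qed.

Lemma l1_seq_of_row N (r : 'rV[R]_N) : l1 (seq_of_row r).
Proof. exact: (l1_finsupp (@finsupp_seq_of_row N r)).1. Qed.

Lemma pairing_seq_of_row N (r : 'rV[R]_N) x :
  pairing (seq_of_row r) x = \sum_(j < N) r 0 j * x j.
Proof.
rewrite (pairing_finsupp _ (@finsupp_seq_of_row N r)).
under eq_bigr do rewrite mulr_suml; rewrite exchange_big /=.
apply: eq_bigr => j _; rewrite -(sum_basis_seq x (ltn_ord j)) mulr_sumr.
by apply: eq_bigr => m _; rewrite mulrA.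
Qed.

Lemma k_strictly_convex_span N (w : 'I_N -> nat -> R) V :
  (forall a, V a -> exists r : 'rV[R]_N, a = fun m => \sum_(j < N) r 0 j * w j m) ->
  k_strictly_convex N V.
Proof.
move=> Vspan x Vx x_indep; exfalso.
have /choice[r xE] : forall i, exists r : 'rV[R]_N,
    x i = fun m => \sum_(j < N) r 0 j * w j m.
  by move=> i; apply: Vspan; case: (Vx i).
pose B : 'M[R]_(N.+1, N) := \matrix_i r i.
have /rowV0Pn[c /sub_kermxP cB c_neq0] : kermx B != 0.
  by rewrite -mxrank_eq0 mxrank_ker; have := rank_leq_col B; lia.
have c_eq0 : forall i, c 0 i = 0.
  apply: x_indep; apply/funext => m.
  under eq_bigr do rewrite xE mulr_sumr; rewrite exchange_big big1 //= => j _.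
  under eq_bigr do rewrite mulrA; rewrite -mulr_suml -[RHS](mul0r (w j m)).
  congr (_ * _); have := congr1 (fun M : 'rV_N => M 0 j) cB; rewrite !mxE => cBj.
  by rewrite -[RHS]cBj; apply: eq_bigr => i _; rewrite mxE.
by move/negP: c_neq0; apply; apply/eqP/rowP => i; rewrite c_eq0 mxE.
Qed.

End SequenceSpaces.

Arguments basis_seq {R} j.

Section RowSpan.
Variables (F : fieldType) (n : nat) (w : nat -> 'rV[F]_n).

Definition rows_mx K : 'M[F]_(K, n) := \matrix_(j < K) w j.

Lemma rows_mx_sub m K : (m < K)%N -> (w m <= rows_mx K)%MS.
Proof. by move=> hm; rewrite -(rowK (fun j : 'I_K => w j) (Ordinal hm)) row_sub. Qed.

Lemma rows_mx_mono K K' : (K <= K')%N -> (rows_mx K <= rows_mx K')%MS.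
Proof.
move=> hK; apply/row_subP => j.
by rewrite rowK rows_mx_sub // (leq_trans (ltn_ord j)).
Qed.

Lemma rows_mx_stable : exists N, forall m, (w m <= rows_mx N)%MS.
Proof.
suff: forall d K, (n - \rank (rows_mx K) <= d)%N ->
    exists N, forall m, (w m <= rows_mx N)%MS.
  by apply; apply: (leq_subr _ _ : (n - \rank (rows_mx 0) <= n)%N).
elim=> [|d IH] K hK.
  exists K => m; apply: submx_full.
  by rewrite /row_full eqn_leq rank_leq_col; have := rank_leq_col (rows_mx K); lia.
case: (pselect (forall m, (w m <= rows_mx K)%MS)) => [|/existsNP[m wm]].
  by exists K.
apply: (IH (K + m.+1)%N).
have /mxrank_leqif_sup rankK := rows_mx_mono (leq_addr m.+1 K).
have : (\rank (rows_mx K) < \rank (rows_mx (K + m.+1)))%N.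
  rewrite (ltn_leqif rankK); apply/negP => hsub; apply: wm.
  by apply: submx_trans hsub; rewrite rows_mx_sub // ltn_addl.
by have := rank_leq_col (rows_mx (K + m.+1)); lia.
Qed.

End RowSpan.

Section FiniteSpan.
Variables (R : realType) (n : nat) (v : 'I_n -> nat -> R).
Local Notation F := (fspan v).

Definition coord_row m : 'rV[R]_n := \row_i v i m.

Variable N : nat.
Hypothesis coord_rows_span : forall m, (coord_row m <= rows_mx coord_row N)%MS.
Local Notation A := (rows_mx coord_row N).

Lemma fspan_v i : F (v i).
Proof.
exists (fun j => (j == i)%:R); apply/funext => m.
by rewrite (bigD1 i) //= eqxx mul1r big1 ?addr0 // => j /negPf ->; rewrite mul0r.
Qed.

Lemma sum_coord_rows (u : 'rV[R]_n) (c : 'I_n -> R) : (u <= A)%MS ->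
  \sum_i c i * u 0 i = \sum_(j < N) (u *m pinvmx A) 0 j * \sum_i c i * v i j.
Proof.
move=> /mulmxKpV uE; rewrite -{1}uE; under [RHS]eq_bigr do rewrite mulr_sumr.
rewrite exchange_big /=; apply: eq_bigr => i _; rewrite !mxE mulr_sumr.
by apply: eq_bigr => j _; rewrite /rows_mx !mxE mulrCA.
Qed.

Definition coord_coef m : 'rV[R]_N := coord_row m *m pinvmx A.

Lemma fspan_coord x m : F x -> x m = \sum_(j < N) coord_coef m 0 j * x j.
Proof.
by move=> [c ->]; rewrite -sum_coord_rows //; apply: eq_bigr => i _; rewrite mxE.
Qed.

Definition dual_row (g : (nat -> R) -> R) : 'rV[R]_n := \row_i g (v i).

(* Each column of cokermx A is a vanishing combination of the v i. *)
Lemma dual_row_sub g : dual_elt F g -> (dual_row g <= A)%MS.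
Proof.
move=> hg; rewrite submxE; apply/eqP/rowP => k; rewrite !mxE.
have -> : \sum_i dual_row g 0 i * cokermx A i k =
    g (fun m => \sum_i cokermx A i k * v i m).
  rewrite (dual_elt_sum _ (fspan_lin_closed v) hg); last exact: fspan_v.
  by apply: eq_bigr => i _; rewrite [dual_row _ _ _]mxE mulrC.
rewrite -[RHS](dual_elt0 (fspan_lin_closed v) hg); congr g; apply/funext => m.
move: (coord_rows_span m); rewrite submxE => /eqP/rowP/(_ k); rewrite !mxE => cE.
by rewrite -[RHS]cE; apply: eq_bigr => i _; rewrite [coord_row _ _ _]mxE mulrC.
Qed.

Definition dual_coef g : 'rV[R]_N := dual_row g *m pinvmx A.

Lemma dual_elt_coord g x : dual_elt F g -> F x ->
  g x = \sum_(j < N) dual_coef g 0 j * x j.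
Proof.
move=> hg [c ->]; rewrite (dual_elt_sum _ (fspan_lin_closed v) hg); last exact: fspan_v.
by rewrite -sum_coord_rows ?dual_row_sub //; apply: eq_bigr => i _; rewrite mxE.
Qed.

Definition span_elt (u : 'rV[R]_N) : nat -> R :=
  fun m => \sum_i (u *m (pinvmx A)^T) 0 i * v i m.

Lemma fspan_span_elt u : F (span_elt u).
Proof. by eexists. Qed.

Lemma span_eltE u m : span_elt u m = \sum_(j < N) coord_coef m 0 j * u 0 j.
Proof.
rewrite /span_elt; under eq_bigr do rewrite mxE mulr_suml.
under [RHS]eq_bigr do rewrite mxE mulr_suml.
by rewrite exchange_big; apply: eq_bigr => j _; apply: eq_bigr => i _; rewrite !mxE; ring.
Qed.

Hypothesis v_c0 : forall i, c0 (v i).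

Lemma fspan_c0 x : F x -> c0 x.
Proof. by move=> [c ->]; apply: lin_closed_sum (c0_lin_closed R) _. Qed.

Variable P : (nat -> R) -> (nat -> R).
Hypothesis P_l1 : forall a, l1 a -> l1 (P a).
Hypothesis P_lin : forall (s t : R) a b, l1 a -> l1 b ->
  P (fun m => s * a m + t * b m) = (fun m => s * P a m + t * P b m).
Hypothesis P_idem : forall a, l1 a -> P (P a) = P a.
Hypothesis P_norm : forall a, l1 a -> l1norm a <= 1 -> l1norm (P a) <= 1.
Hypothesis P_ker : forall a, l1 a -> (P a = (fun _ => 0) <-> annihilator F a).

Lemma P_sub a b : l1 a -> l1 b -> P (fun m => a m - b m) = fun m => P a m - P b m.
Proof.
move=> ha hb; have -> : (fun m => a m - b m) = fun m => 1 * a m + (-1) * b m.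
  by apply/funext => m; rewrite mul1r mulN1r.
by rewrite P_lin //; apply/funext => m; rewrite mul1r mulN1r.
Qed.

Lemma P_seq_of_row K (r : 'rV[R]_K) :
  P (seq_of_row r) = fun m => \sum_(j < K) r 0 j * P (basis_seq j) m.
Proof.
apply/funext => m; apply: (dual_elt_sum _ (l1_lin_closed R) (L := fun a => P a m)).
  by move=> s t a b ha hb; rewrite P_lin.
by move=> j; case: (l1_basis_seq R j).
Qed.

Lemma pairing_P a x : l1 a -> F x -> (forall m, `|x m| <= 1) ->
  pairing (P a) x = pairing a x.
Proof.
move=> ha hx x1; have hPa := P_l1 ha.
have [_ /(_ x hx)] : annihilator F (fun m => a m - P a m).
  apply/P_ker; first exact: l1B.
  by rewrite P_sub // P_idem //; apply/funext => m; rewrite subrr.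
by rewrite pairingB // => /eqP; rewrite subr_eq0 => /eqP ->.
Qed.

(* e_m - seq_of_row (coord_coef m) lies in F^perp by fspan_coord. *)
Lemma P_basis_seq m :
  P (basis_seq m) = fun k => \sum_(j < N) coord_coef m 0 j * P (basis_seq j) k.
Proof.
have [he _] := l1_basis_seq R m; have hr := @l1_seq_of_row _ _ (coord_coef m).
have : annihilator F (fun k => basis_seq m k - seq_of_row (coord_coef m) k).
  split=> [|x hx]; first exact: l1B.
  rewrite (@pairing_finsuppB _ (maxn m.+1 N)); last 2 first.
  - by apply: finsuppW (@finsupp_basis_seq R m); rewrite leq_maxl.
  - by apply: finsuppW (@finsupp_seq_of_row R N _); rewrite leq_maxr.
  by rewrite pairing_basis_seq pairing_seq_of_row -fspan_coord ?subrr.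
move=> /(P_ker (l1B he hr)).2; rewrite P_sub // -P_seq_of_row => PE.
apply/funext => k; apply/eqP; rewrite -subr_eq0; apply/eqP.
exact: (congr1 (@^~ k) PE).
Qed.

Definition embed_dual g := P (seq_of_row (dual_coef g)).

Lemma l1_embed_dual g : l1 (embed_dual g).
Proof. exact/P_l1/l1_seq_of_row. Qed.

Lemma embed_dual_span g :
  embed_dual g = fun m => \sum_(j < N) dual_coef g 0 j * P (basis_seq j) m.
Proof. exact: P_seq_of_row. Qed.

Lemma embed_dual_lin (s t : R) g h :
  embed_dual (fun x => s * g x + t * h x) =
  fun m => s * embed_dual g m + t * embed_dual h m.
Proof.
rewrite /embed_dual -P_lin; try exact: l1_seq_of_row.
rewrite -seq_of_row_lin /dual_coef !scalemxAl -mulmxDl.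
by congr (P (seq_of_row (_ *m _))); apply/rowP => i; rewrite !mxE.
Qed.

Lemma dual_le_l1norm_embed g x : dual_elt F g -> F x -> supnorm x <= 1 ->
  `|g x| <= l1norm (embed_dual g).
Proof.
move=> hg hx hx1.
have x1 m : `|x m| <= 1 := le_trans (c0_le_supnorm m (fspan_c0 hx)) hx1.
rewrite (dual_elt_coord hg hx) -pairing_seq_of_row -(pairing_P _ hx x1).
  exact: pairing_le (@l1_embed_dual g) x1.
exact: l1_seq_of_row.
Qed.

Definition norming_elt (M : nat) (y : nat -> R) : nat -> R :=
  span_elt (\row_(j < N) \sum_(k < M) P (basis_seq j) k * y k).

Lemma norming_eltE M y m :
  norming_elt M y m = \sum_(k < M) P (basis_seq m) k * y k.
Proof.
rewrite /norming_elt span_eltE P_basis_seq; under [RHS]eq_bigr do rewrite mulr_suml.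
rewrite exchange_big /=; apply: eq_bigr => j _; rewrite mxE mulr_sumr.
by apply: eq_bigr => k _; rewrite mulrA.
Qed.

Lemma norming_elt_le1 M y : (forall k, `|y k| <= 1) -> supnorm (norming_elt M y) <= 1.
Proof.
move=> y1; apply: supnorm_le => m; rewrite norming_eltE.
have [he he1] := l1_basis_seq R m.
have Pe1 : l1norm (P (basis_seq m)) <= 1 by apply: P_norm he _; rewrite he1.
apply: le_trans (ler_norm_sum _ _ _) (le_trans _ Pe1).
apply: le_trans (l1_psum_le M (P_l1 he)); apply: ler_sum => k _.
by rewrite normrM -[leRHS]mulr1 ler_wpM2l.
Qed.

Lemma dual_norming_elt g M y : dual_elt F g ->
  g (norming_elt M y) = \sum_(k < M) embed_dual g k * y k.
Proof.
move=> hg; have hx : F (norming_elt M y) by exact: fspan_span_elt.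
rewrite embed_dual_span (dual_elt_coord hg hx).
under eq_bigr do rewrite norming_eltE; under [RHS]eq_bigr do rewrite mulr_suml.
rewrite exchange_big /=; apply: eq_bigr => j _; rewrite mulr_sumr.
by apply: eq_bigr => k _; rewrite mulrA.
Qed.

Lemma l1norm_embed_dual g : dual_elt F g -> l1norm (embed_dual g) = dualnorm F g.
Proof.
move=> hg; set S := [set `|g x| | x in [set x | F x /\ supnorm x <= 1]].
have ubS : ubound S (l1norm (embed_dual g)).
  by move=> _ [x [hx hx1] <-]; exact: dual_le_l1norm_embed.
apply/le_anti/andP; split; last first.
  apply: ge_sup ubS; exists `|g (fun _ => 0)|, (fun _ => 0); split.
    exact: (fspan_lin_closed v).1.
  by apply: supnorm_le => m; rewrite normr0.
apply: l1norm_le (@l1_embed_dual g) _ => M.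
pose y k := Num.sg (embed_dual g k).
have y1 k : `|y k| <= 1 by rewrite normr_sg; case: (_ != _).
have -> : \sum_(k < M) `|embed_dual g k| = g (norming_elt M y).
  by rewrite dual_norming_elt //; apply: eq_bigr => k _; rewrite normrEsg mulrC.
apply: le_trans (ler_norm _) _.
apply: ub_le_sup; first by exists (l1norm (embed_dual g)).
exists (norming_elt M y) => //.
by split; [exact: fspan_span_elt | exact: norming_elt_le1].
Qed.

End FiniteSpan.

Theorem theorem4p15 (R : realType) (n : nat) (v : 'I_n -> nat -> R) :
  (forall i, c0 (v i)) ->
  is_ideal_in_c0 (fspan v) ->
  exists (k : nat) (T : ((nat -> R) -> R) -> (nat -> R)),
    [/\ (forall g, dual_elt (fspan v) g -> l1 (T g)),
        (forall g, dual_elt (fspan v) g -> l1norm (T g) = dualnorm (fspan v) g),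
        (forall (s t : R) g h, dual_elt (fspan v) g -> dual_elt (fspan v) h ->
            T (fun x => s * g x + t * h x) = (fun m => s * T g m + t * T h m)) &
        k_strictly_convex k (T @` dual_elt (fspan v))].
Proof.
move=> v_c0 [P [[P_l1 P_lin P_idem P_sup] P_ker]].
have P_norm a : l1 a -> l1norm a <= 1 -> l1norm (P a) <= 1.
  move=> ha ha1; rewrite -P_sup.
  by apply: le_sup_neq0; [rewrite P_sup oner_neq0 | exists a].
have [N coord_span] := rows_mx_stable (coord_row v).
exists N, (embed_dual v N P); split.
- by move=> g _; exact: l1_embed_dual.
- by move=> g; exact: l1norm_embed_dual.
- by move=> s t g h _ _; exact: embed_dual_lin.
- apply: (k_strictly_convex_span (w := fun j => P (basis_seq j))) => _ [g _ <-].
  by exists (dual_coef v N g); exact: embed_dual_span.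
Qed.
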